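(* For every message $M$ and formula $\phi$: $\vdash[M][M]\phi\leftrightarrow[M]\phi$.
   Context: Fix a finite set $\mathcal{A}$ of agent names containing a distinguished name $\mathsf{CM}$. Messages: $M ::= a \mid B \mid (M,M)$ ($a\in\mathcal{A}$, $B$ optional data constants, pairs). $\mathcal{P}$ is a denumerable set of propositional variables containing atoms $\mathsf{k}_a(M)$ (''$a$ knows $M$''). Formulas: $\phi ::= P \mid \phi\wedge\phi \mid \phi\vee\phi \mid \neg\phi \mid \phi\to\phi \mid [M]\phi$. Abbreviations: $\mathrm{true}:=\mathsf{k}_{\mathsf{CM}}(\mathsf{CM})$, $\mathrm{false}:=\neg\mathrm{true}$, $\phi\leftrightarrow\psi:=(\phi\to\psi)\wedge(\psi\to\phi)$, $\langle M\rangle\phi:=\neg\neg(\mathsf{k}_{\mathsf{CM}}(M)\wedge\phi)$. LIiP is the smallest set of formulas containing all instances of: the axioms of an adequate Hilbert axiomatization of intuitionistic propositional logic; $\mathsf{k}_a(a)$; $(\mathsf{k}_a(M)\wedge\mathsf{k}_a(M'))\leftrightarrow\mathsf{k}_a((M,M'))$; $[M]\mathsf{k}_{\mathsf{CM}}(M)$; $[M](\phi\to\psi)\to([M]\phi\to[M]\psi)$; $[M]\phi\to(\mathsf{k}_{\mathsf{CM}}(M)\to\phi)$; $[M]\phi\to\langle M\rangle\phi$; $\phi\to[M]\phi$; and closed under modus ponens and the rule: if $\mathsf{k}_{\mathsf{CM}}(M)\to\mathsf{k}_{\mathsf{CM}}(M')$ is in the set then so is $[M']\phi\to[M]\phi$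 for every $\phi$. Write $\vdash\phi$ for $\phi\in\mathrm{LIiP}$. *)

From Stdlib Require Import List.
Set Implicit Arguments.

Section LIiP.
(* A : agent names, cm : the distinguished name CM, D : data constants. *)
Variable A : Type.
Variable cm : A.
Variable D : Type.

Inductive msg : Type :=
| MAg : A -> msg
| MData : D -> msg
| MPair : msg -> msg -> msg.

(* Propositional variables: the atoms k_a(M), plus denumerably many others. *)
Inductive pvar : Type :=
| PK : A -> msg -> pvar
| PV : nat -> pvar.

Inductive form : Type :=
| FVar : pvar -> form
| FAnd : form -> form -> form
| FOr : form -> form -> form
| FNot : form -> form
| FImp : form -> form -> form
| FBox : msg -> form -> form.

Definition K (a : A) (M : msg) : form := FVar (PK a M).
Definition FTrue : form := K cm (MAg cm).
Definition FFalse : form := FNot FTrue.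
Definition FIff (p q : form) : form := FAnd (FImp p q) (FImp q p).
Definition FDia (M : msg) (p : form) : form := FNot (FNot (FAnd (K cm M) p)).

(* Intuitionistic
   propositional logic is axiomatized by Kleene's Hilbert system (with
   primitive negation). *)
Inductive LIiP : form -> Prop :=
| ax_K : forall p q, LIiP (FImp p (FImp q p))
| ax_S : forall p q r,
    LIiP (FImp (FImp p (FImp q r)) (FImp (FImp p q) (FImp p r)))
| ax_andE1 : forall p q, LIiP (FImp (FAnd p q) p)
| ax_andE2 : forall p q, LIiP (FImp (FAnd p q) q)
| ax_andI : forall p q, LIiP (FImp p (FImp q (FAnd p q)))
| ax_orI1 : forall p q, LIiP (FImp p (FOr p q))
| ax_orI2 : forall p q, LIiP (FImp q (FOr p q))
| ax_orE : forall p q r,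
    LIiP (FImp (FImp p r) (FImp (FImp q r) (FImp (FOr p q) r)))
| ax_negI : forall p q,
    LIiP (FImp (FImp p q) (FImp (FImp p (FNot q)) (FNot p)))
| ax_negE : forall p q, LIiP (FImp (FNot p) (FImp p q))
| ax_self : forall a, LIiP (K a (MAg a))
| ax_pair : forall a M M',
    LIiP (FIff (FAnd (K a M) (K a M')) (K a (MPair M M')))
| ax_boxK_CM : forall M, LIiP (FBox M (K cm M))
| ax_boxK : forall M p q,
    LIiP (FImp (FBox M (FImp p q)) (FImp (FBox M p) (FBox M q)))
| ax_boxT : forall M p, LIiP (FImp (FBox M p) (FImp (K cm M) p))
| ax_boxD : forall M p, LIiP (FImp (FBox M p) (FDia M p))
| ax_box4 : forall M p, LIiP (FImp p (FBox M p))
| rule_mp : forall p q, LIiP (FImp p q) -> LIiP p -> LIiP q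
| rule_anti : forall M M' p,
    LIiP (FImp (K cm M) (K cm M')) -> LIiP (FImp (FBox M' p) (FBox M p)).

End LIiP.

(* [M] phi -> [M][M] phi is an instance of the axiom phi -> [M] phi.  Conversely,
   the axiom [M] psi -> (k_CM(M) -> psi) boxed under [M] gives
   [M][M] phi -> [M](k_CM(M) -> phi), and distributing [M] over the implication
   discharges its premise with [M] k_CM(M). *)
From Stdlib Require Import List.

Set Implicit Arguments.

Section LIiPRules.
Variables (A : Type) (cm : A) (D : Type).
Notation provable := (@LIiP A cm D).

Lemma imp_weaken p q : provable q -> provable (FImp p q).
Proof. intros Hq. exact (rule_mp (ax_K cm q p) Hq). Qed.

Lemma imp_mp_under p q r :
  provable (FImp p (FImp q r)) -> provable (FImp p q) -> provable (FImp p r).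
Proof. intros Hqr Hq. exact (rule_mp (rule_mp (ax_S cm p q r) Hqr) Hq). Qed.

Lemma imp_trans p q r :
  provable (FImp p q) -> provable (FImp q r) -> provable (FImp p r).
Proof. intros Hpq Hqr. exact (imp_mp_under (imp_weaken p Hqr) Hpq). Qed.

Lemma iff_intro p q :
  provable (FImp p q) -> provable (FImp q p) -> provable (FIff p q).
Proof. intros Hpq Hqp. exact (rule_mp (rule_mp (ax_andI cm _ _) Hpq) Hqp). Qed.

Lemma box_nec M p : provable p -> provable (FBox M p).
Proof. intros Hp. exact (rule_mp (ax_box4 cm M p) Hp). Qed.

Lemma box_mono M p q :
  provable (FImp p q) -> provable (FImp (FBox M p) (FBox M q)).
Proof. intros Hpq. exact (rule_mp (ax_boxK cm M p q) (box_nec M Hpq)). Qed.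

Lemma box_box_elim M p : provable (FImp (FBox M (FBox M p)) (FBox M p)).
Proof.
  apply (imp_trans (q := FBox M (FImp (K cm M) p))).
  - exact (box_mono M (ax_boxT cm M p)).
  - pose proof (ax_boxK cm M (K cm M) p) as Hdist.
    exact (imp_mp_under Hdist (imp_weaken _ (ax_boxK_CM cm M))).
Qed.

End LIiPRules.

Theorem theorem2p36 (A : Type) (cm : A) (D : Type)
  (A_finite : exists l : list A, forall a : A, In a l)
  (M : msg A D) (phi : form A D) :
  LIiP cm (FIff (FBox M (FBox M phi)) (FBox M phi)).
Proof.
  apply iff_intro.
  - exact (box_box_elim cm M phi).
  - exact (ax_box4 cm M (FBox M phi)).
Qed.
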